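(* Let $X,Y,\tilde X,\tilde Y$ be cellular spaces with $X$ and $\tilde X$ compact, let $r\ge0$, let $k\colon\tilde X\to X$ and $h\colon Y\to\tilde Y$ be maps, and let $a,b\colon X\to Y$ be maps with $a\overset{r}{\approx}b$. Then $a\circ k\overset{r}{\approx}b\circ k$ (as maps $\tilde X\to Y$) and $h\circ a\overset{r}{\approx}h\circ b$ (as maps $X\to\tilde Y$).
   Context: Cellular space = based CW complex; maps based. Strong similarity: $\langle W\rangle$ = free abelian group on a set $W$. $Y^X$ = based maps (compact-open), based at the constant map; $Y^X_a$ = path component of $a$; $V\mapsto V|_R$ restriction; $\mathcal F_n(X)$ = finite $R\subseteq X$ containing the basepoint with $|R|\le n+1$; $\langle Y^X\rangle^{(s)}=\{V:V|_R=0\ \forall R\in\mathcal F_{s-1}(X)\}$. For unbased $U,V$: $V^{(U)}$ = unbased maps; $\Xi^U(v)$ = constant map at $v$; for $U=\coprod_iU_i$ the combining product $\boxed{\sqcup}_i\langle w_i\rangle=\langle w\rangle$, $w|_{U_i}=w_i$, multilinear. For nonempty finite $E$: simplex $\Delta E$, faces $\Delta F$; layouts = sets $A$ of pairwise disjoint nonempty subsets; $\Delta[A]=\coprod_{F\in A}\Delta F$; $S\in\langle V^{(\Delta E)}\rangle$ fissile if $S|_{\Delta[A]}=\boxed{\sqcup}_{F\in A}S|_{\Delta F}$ for all layouts. $U\wr X=(U\times X)/(U\times\{x_0\})$, $\#^X(w)(u\wr x)=w(u)(x)$, $\langle (Y^X)^{(U)}\rangle^{(s)}_X=\langle\#^X\rangle^{-1}\langle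 Y^{U\wr X}\rangle^{(s)}$. $a\overset{r}{\approx}b$ iff for each nonempty finite $E$ there is a fissile $S\in\langle (Y^X_a)^{(\Delta E)}\rangle$ with $\langle\Xi^{\Delta E}(b)\rangle-S\in\langle (Y^X)^{(\Delta E)}\rangle^{(r+1)}_X$. *)

From HB Require Import structures.
From mathcomp Require Import all_boot all_order all_algebra.
From mathcomp Require Import all_classical all_reals all_analysis.
From mathcomp Require Import Rstruct Rstruct_topology.
From Stdlib Require Import List.

Set Implicit Arguments.
Unset Strict Implicit.
Unset Printing Implicit Defensive.
Import Order.TTheory GRing.Theory Num.Theory.
Local Open Scope classical_set_scope.
Local Open Scope ring_scope.

Definition RR := Rdefinitions.R.

(** Free abelian groups: an element of <W> (W : set T) is a finitely supported
    coefficient function T -> int whose support lies in W. *)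
Definition fsupp (T : Type) (c : T -> int) : set T := [set w | c w != 0].
Definition in_free (T : Type) (W : set T) (c : T -> int) : Prop :=
  finite_set (fsupp c) /\ fsupp c `<=` W.
Definition gen (T : Type) (w : T) : T -> int :=
  fun v => if `[< v = w >] then 1 else 0.
Definition push (T T' : Type) (f : T -> T') (c : T -> int) : T' -> int :=
  fun v => \sum_(w \in [set w : {classic T} | f w = v]) c w.

Definition bmaps (X Y : ptopologicalType) : set (X -> Y) :=
  [set f | continuous f /\ f point = point].

Definition pcomp (X Y : ptopologicalType) (a : X -> Y) : set (X -> Y) :=
  [set f | bmaps f /\ exists g : RR -> {compact-open, X -> Y},
      {within [set t : RR | 0 <= t <= 1], continuous g} /\
      (forall t, 0 <= t <= 1 -> bmaps (g t : X -> Y)) /\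
      (g 0 : X -> Y) = a /\ (g 1 : X -> Y) = f].

Definition simplex (E : finType) : set {ptws E -> RR} :=
  [set t | (forall i, 0 <= t i) /\ \sum_(i : E) t i = 1].
Definition face (E : finType) (F : {set E}) : set {ptws E -> RR} :=
  [set t | simplex t /\ forall i, i \notin F -> t i = 0].
Definition layout (E : finType) (A : {set {set E}}) : Prop :=
  (forall F, F \in A -> F != finset.set0) /\
  (forall F G, F \in A -> G \in A -> F != G -> (F :&: G)%SET == finset.set0).
(** Delta[A] = coproduct of the faces Delta F, F in A; since these faces are
    pairwise disjoint closed subsets of Delta E, we realise it as their union. *)
Definition layout_space (E : finType) (A : {set {set E}}) : set {ptws E -> RR} :=
  \bigcup_(F in [set F | F \in A]) face F.

(** Unbased maps U -> V, for U a subspace of a space D and V a subspace of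
    Y^X; a map is represented by a function D -> (X -> Y) normalised to the
    constant based map outside U. *)
Definition dflt (X Y : ptopologicalType) : X -> Y := fun _ => point.
Definition restrU (D : Type) (X Y : ptopologicalType) (U : set D)
    (w : D -> (X -> Y)) : D -> (X -> Y) :=
  fun t => if `[< U t >] then w t else @dflt X Y.
Definition umaps (D : topologicalType) (X Y : ptopologicalType) (U : set D)
    (V : set (X -> Y)) : set (D -> (X -> Y)) :=
  [set w | {within U, continuous (fun t => (w t : {compact-open, X -> Y}))} /\
           (forall t, U t -> V (w t)) /\
           (forall t, ~ U t -> w t = @dflt X Y)].
Definition Xi (D : Type) (X Y : ptopologicalType) (U : set D) (v : X -> Y) :
  D -> (X -> Y) := restrU U (fun _ => v).

(** the combining product of the family (P F)_{F in A}, P F in <V^(Delta F)>,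
    extended multilinearly from  [+]_F <w_F> = <w>, w|_{Delta F} = w_F. *)
Definition glue (E : finType) (X Y : ptopologicalType) (A : {set {set E}})
    (tup : {set E} -> ({ptws E -> RR} -> (X -> Y))) : {ptws E -> RR} -> (X -> Y) :=
  fun t => if `[< exists F, F \in A /\ face F t >]
           then tup (xget finset.set0 [set F | F \in A /\ face F t]) t
           else @dflt X Y.
Definition comb (E : finType) (X Y : ptopologicalType) (A : {set {set E}})
    (P : {set E} -> ({ptws E -> RR} -> (X -> Y)) -> int) :
    ({ptws E -> RR} -> (X -> Y)) -> int :=
  fun g => \sum_(tup \in [set tup : {classic ({set E} -> ({ptws E -> RR} -> (X -> Y)))} |
                  (forall F, F \notin A -> tup F = (fun _ => @dflt X Y)) /\
                  glue A tup = g])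
             \prod_(F in A) P F (tup F).
Definition fissile (E : finType) (X Y : ptopologicalType)
    (S : ({ptws E -> RR} -> (X -> Y)) -> int) : Prop :=
  forall A : {set {set E}}, layout A ->
    push (restrU (layout_space A)) S = comb A (fun F => push (restrU (face F)) S).

(** U wr X = (U x X)/(U x {x0}): its points are the basepoint (None) and the
    classes Some (u, x) with u in U and x <> x0 (singleton classes). *)
Definition wr_pts (D : Type) (X : ptopologicalType) (U : set D) : set (option (D * X)) :=
  [set None] `|` [set Some p | p in [set p : D * X | U p.1 /\ p.2 != point]].
Definition sharp (D : Type) (X Y : ptopologicalType) (w : D -> (X -> Y)) :
    option (D * X) -> Y :=
  fun z => match z with None => point | Some p => w p.1 p.2 end.
Definition Fn (D : Type) (X : ptopologicalType) (n : nat) (U : set D) :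
    set (set (option (D * X))) :=
  [set R | R `<=` wr_pts U /\ R None /\
           exists s : list (option (D * X)), (size s <= n.+1)%N /\ R = [set z | List.In z s]].
Definition restrZ (Z : Type) (Y : ptopologicalType) (R : set Z) (g : Z -> Y) : Z -> Y :=
  fun z => if `[< R z >] then g z else point.
(** membership in <(Y^X)^(U)>^(s)_X = <#^X>^{-1} <Y^(U wr X)>^(s) *)
Definition in_filt (D : topologicalType) (X Y : ptopologicalType) (s : nat)
    (U : set D) (V : (D -> (X -> Y)) -> int) : Prop :=
  in_free (umaps U (@bmaps X Y)) V /\
  forall R, @Fn D X s.-1 U R -> push (fun w => restrZ R (sharp w)) V = (fun _ => 0).

Definition r_approx (X Y : ptopologicalType) (r : nat) (a b : X -> Y) : Prop :=
  forall E : finType, (0 < #|E|)%N ->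
    exists S : ({ptws E -> RR} -> (X -> Y)) -> int,
      in_free (umaps (@simplex E) (pcomp a)) S /\ fissile S /\
      in_filt r.+1 (@simplex E) (fun w => gen (Xi (@simplex E) b) w - S w).

(** Cellular spaces = based CW complexes (Whitehead's definition via
    characteristic maps  phi_i : D^(dim i) -> X). *)
Definition cdisk (n : nat) : set 'rV[RR]_n :=
  [set v | \sum_(i < n) (v ord0 i) ^+ 2 <= 1].
Definition odisk (n : nat) : set 'rV[RR]_n :=
  [set v | \sum_(i < n) (v ord0 i) ^+ 2 < 1].
Definition sphere (n : nat) : set 'rV[RR]_n :=
  [set v | \sum_(i < n) (v ord0 i) ^+ 2 = 1].

Definition cellular (X : ptopologicalType) : Prop :=
  hausdorff_space X /\
  exists (I : Type) (dim : I -> nat) (phi : forall i, 'rV[RR]_(dim i) -> X),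
    (forall i, {within @cdisk (dim i), continuous (phi i)}) /\
    (forall i u v, @odisk (dim i) u -> @odisk (dim i) v -> phi i u = phi i v -> u = v) /\
    (forall x : X, exists i u, @odisk (dim i) u /\ phi i u = x) /\
    (forall i j u v, @odisk (dim i) u -> @odisk (dim j) v -> phi i u = phi j v -> i = j) /\
    (forall i, exists J : set I, finite_set J /\ (forall j, J j -> (dim j < dim i)%N) /\
       forall u, @sphere (dim i) u ->
         exists j v, J j /\ @odisk (dim j) v /\ phi j v = phi i u) /\
    (forall A : set X, (forall i, closed (@cdisk (dim i) `&` phi i @^-1` A)) -> closed A) /\
    (exists i, dim i = 0%N /\ forall u, phi i u = point).

From mathcomp Require Import all_boot all_order all_algebra.
From mathcomp Require Import all_classical all_reals all_analysis.
From mathcomp Require Import Rstruct Rstruct_topology.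

(* Pre- and postcomposition induce a based map m : Y^X -> Y'^X' that is
   continuous for the compact-open topology, and a chain S of maps from a
   simplex into Y^X_a is pushed forward along w |-> m o w.  The pushforward
   lands in Y'^X'_(m a), sends Xi(b) to Xi(m b), and commutes with
   restriction to faces; since m o - also commutes with gluing, it commutes
   with the combining product, so fissile chains stay fissile.  The filtration
   is preserved because the restriction of #(m o w) to a finite subset R of
   U wr X' only depends on the restriction of #w to a subset of U wr X of at
   most the same size: the image of R under id wr k for precomposition, R
   itself for postcomposition. *)

Set Implicit Arguments.
Unset Strict Implicit.
Unset Printing Implicit Defensive.
Import GRing.Theory.
Local Open Scope classical_set_scope.
Local Open Scope ring_scope.

Definition covers (T : Type) (c : T -> int) (s : seq {classic T}) :=
  uniq s /\ forall w, c w != 0 -> w \in s.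

Definition fsupp_seq (T : Type) (c : T -> int) : seq {classic T} :=
  finmap.enum_fset (fset_set (fsupp c : set {classic T})).

Lemma covers_fsupp_seq (T : Type) (c : T -> int) :
  finite_set (fsupp c) -> covers c (fsupp_seq c).
Proof.
move=> fc; split; first exact: finmap.fset_uniq.
by move=> w cw; rewrite /fsupp_seq (@in_fset_set {classic T}) // inE.
Qed.

Lemma covers_finite (T : Type) (c : T -> int) s :
  covers c s -> finite_set (fsupp c).
Proof. by move=> [_ cs]; apply: sub_finite_set (finite_seq s) => w /cs. Qed.

Lemma pushE (T T' : Type) (f : T -> T') (c : T -> int) s v : covers c s ->
  push f c v = \sum_(w <- s) (if `[< f w = v >] then c w else 0).
Proof.
move=> [us cs]; rewrite /push fsbig_mkcond fsbig_supp (fsbig_fwiden s) //.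
- move=> w [_ /=]; rewrite /patch; case: ifPn => // _ /eqP; exact: cs.
- by move=> w [_ /= H]; apply: contra_notP H => H.
Qed.

Lemma push_neq0 (T T' : Type) (f : T -> T') (c : T -> int) s v : covers c s ->
  push f c v != 0 -> exists w, [/\ w \in s, f w = v & c w != 0].
Proof.
move=> cs; rewrite (pushE _ _ cs); apply: contra_neqP => H.
apply: big1_seq => w ws; case: asboolP => // fw.
by case: (eqVneq (c w) 0) => // cw; case: H; exists w.
Qed.

Lemma covers_push (T T' : Type) (f : T -> T') (c : T -> int) s :
  covers c s -> covers (push f c) (undup [seq (f w : {classic T'}) | w <- s]).
Proof.
move=> cs; split; first exact: undup_uniq.
move=> v /(push_neq0 cs) [w [ws <- _]].
by rewrite (@mem_undup {classic T'}); apply: (@map_f {classic T} {classic T'}).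
Qed.

Lemma finite_fsupp_push (T T' : Type) (f : T -> T') (c : T -> int) :
  finite_set (fsupp c) -> finite_set (fsupp (push f c)).
Proof. by move=> fc; apply: covers_finite (covers_push f (covers_fsupp_seq fc)). Qed.

Lemma eq_push (T T' : Type) (f g : T -> T') (c : T -> int) :
  finite_set (fsupp c) -> (forall w, c w != 0 -> f w = g w) -> push f c = push g c.
Proof.
move=> /covers_fsupp_seq cs fg; apply/funext => v; rewrite !(pushE _ _ cs).
by apply: eq_bigr => w _; case: (eqVneq (c w) 0) => [->|/fg ->]; rewrite ?if_same.
Qed.

Lemma push_comp (T T' T'' : Type) (f : T -> T') (g : T' -> T'') (c : T -> int) :
  finite_set (fsupp c) -> push g (push f c) = push (g \o f) c.
Proof.
move=> /covers_fsupp_seq cs; have cs' := covers_push f cs.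
apply/funext => u; rewrite (pushE _ _ cs') (pushE _ _ cs) -big_mkcond /=.
under eq_bigr => v _ do rewrite (pushE f _ cs).
rewrite exchange_big /=; apply: eq_big_seq => w ws.
rewrite big_mkcond /= (bigD1_seq (f w : {classic T'})) ?undup_uniq //=; last first.
  by rewrite (@mem_undup {classic T'}); apply: (@map_f {classic T} {classic T'}).
rewrite big1 ?addr0; first by rewrite (asboolT (erefl (f w))).
move=> v vn; case: ifP => // _; case: asboolP => // fv.
by rewrite fv eqxx in vn.
Qed.

Lemma covers_gen (T : Type) (x : T) : covers (gen x) [:: x : {classic T}].
Proof.
split=> // w; rewrite /gen; case: asboolP => [-> _|_]; last by rewrite eqxx.
exact: (@mem_head {classic T}).
Qed.

Lemma push_gen (T T' : Type) (f : T -> T') (x : T) : push f (gen x) = gen (f x).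
Proof.
apply/funext => v; rewrite (pushE _ _ (covers_gen x)) big_seq1 /gen.
rewrite (asboolT (erefl x)); case: (asboolP (f x = v)) => [<-|fxv].
  by rewrite asboolT.
by rewrite asboolF // => vfx; apply: fxv.
Qed.

Lemma pushB (T T' : Type) (f : T -> T') (c1 c2 : T -> int) :
  finite_set (fsupp c1) -> finite_set (fsupp c2) ->
  push f (fun w => c1 w - c2 w) = fun v => push f c1 v - push f c2 v.
Proof.
move=> /covers_fsupp_seq [_ cs1] /covers_fsupp_seq [_ cs2].
set s := undup (fsupp_seq c1 ++ fsupp_seq c2).
have sP w : (w \in s) = (w \in fsupp_seq c1) || (w \in fsupp_seq c2).
  by rewrite (@mem_undup {classic T}) (@mem_cat {classic T}).
have cov (c : T -> int) : (forall w, c w != 0 -> c1 w != 0 \/ c2 w != 0) ->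
    covers c s.
  by move=> H; split=> [|w /H [/cs1|/cs2]];
    rewrite ?undup_uniq // sP => ->; rewrite ?orbT.
have cov12 : covers (fun w => c1 w - c2 w) s.
  apply: cov => w; apply: contra_neqP => /not_orP[/negP/negPn/eqP -> /negP/negPn/eqP ->].
  by rewrite subr0.
apply/funext => v.
rewrite (pushE f v cov12) (pushE f v (cov c1 _)) ?(pushE f v (cov c2 _)).
- by rewrite -sumrB; apply: eq_bigr => w _; case: ifP; rewrite ?subr0.
- by right.
- by left.
Qed.

Lemma push0 (T T' : Type) (f : T -> T') : push f (fun _ : T => 0) = fun _ => 0.
Proof. by apply/funext => v; rewrite /push fsbig1. Qed.

Lemma in_free_push (T T' : Type) (f : T -> T') (c : T -> int) (W : set T) (W' : set T') :
  in_free W c -> (forall w, W w -> W' (f w)) -> in_free W' (push f c).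
Proof.
move=> [fc cW] fW; split; first exact: finite_fsupp_push.
by move=> v /= /(push_neq0 (covers_fsupp_seq fc)) [w [_ <- /cW/fW]].
Qed.

Section Tuples.
Variables (I : eqType) (M : Type) (d : M).
Local Notation cM := {classic M}.
Local Notation cIM := {classic (I -> M)}.

Definition upd (tau : I -> M) (i : I) (w : M) : I -> M :=
  fun j => if j == i then w else tau j.

Fixpoint tups (l : seq I) (s : I -> seq cM) : seq cIM :=
  if l is i :: l' then [seq (upd tau i w : cIM) | w <- s i, tau <- tups l' s]
  else [:: (fun _ => d) : cIM].

Lemma big_distr_tups (l : seq I) (s : I -> seq cM) (G : I -> M -> int) :
  uniq l ->
  \prod_(i <- l) \sum_(w <- s i) G i w =
  \sum_(tau <- tups l s) \prod_(i <- l) G i (tau i).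
Proof.
elim: l => [|i l IH] /=; first by rewrite big_nil big_seq1 big_nil.
move=> /andP [il ul]; rewrite big_cons IH // big_distrl /=.
rewrite big_allpairs_dep /=; apply: eq_bigr => w _.
rewrite big_distrr /=; apply: eq_bigr => tau _.
rewrite big_cons /upd eqxx; congr (_ * _); apply: eq_big_seq => j jl.
by case: eqP => // ji; move: jl; rewrite ji (negbTE il).
Qed.

Lemma mem_tups (l : seq I) (s : I -> seq cM) (tau : cIM) : uniq l ->
  (tau \in tups l s) <->
  (forall i, i \in l -> (tau i : cM) \in s i) /\ (forall i, i \notin l -> tau i = d).
Proof.
elim: l tau => [|i l IH] tau /=.
  move=> _; rewrite inE; split; first by move=> /eqP ->.
  by case=> _ H; apply/eqP/funext => j; exact: H.
move=> /andP [il ul]; split.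
  move=> /(@allpairsP cM cIM cIM) [[w tau'] [/= ws /IH [] // H1 H2 ->]]; split.
    move=> j; rewrite in_cons /upd; case: eqP => [-> //|ji] /= jl; exact: H1.
  move=> j; rewrite in_cons negb_or /upd => /andP [ji jl]; rewrite (negbTE ji).
  exact: H2.
case=> H1 H2; apply/(@allpairsP cM cIM cIM).
exists ((tau i : cM), (upd tau i d : cIM)); split => /=.
- by apply: H1; rewrite mem_head.
- apply/IH => //; split.
    move=> j jl; rewrite /upd; case: eqP => [ji|ji].
      by move: jl; rewrite ji (negbTE il).
    by apply: H1; rewrite in_cons jl orbT.
  move=> j jl; rewrite /upd; case: eqP => // ji; apply: H2.
  by rewrite in_cons negb_or jl andbT; apply/eqP.
- by apply/funext => j; rewrite /upd; case: eqP => // ->.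
Qed.

Lemma uniq_tups (l : seq I) (s : I -> seq cM) :
  uniq l -> (forall i, uniq (s i)) -> uniq (tups l s).
Proof.
elim: l => [|i l IH] //= /andP [il ul] us.
apply: (@allpairs_uniq cM cIM cIM) => //; first exact: IH.
move=> [w tau] [w' tau'] /(@allpairsP cM cIM _) [[w1 t1] [/= _ t1l [-> ->]]].
move=> /(@allpairsP cM cIM _) [[w2 t2] [/= _ t2l [-> ->]]] /= E.
have /(mem_tups _ _ ul) [_ h1] := t1l.
have /(mem_tups _ _ ul) [_ h2] := t2l.
have -> : w1 = w2 by have := congr1 (fun f => f i) E; rewrite /upd eqxx.
congr (_, _); apply/funext => j.
have := congr1 (fun f => f j) E; rewrite /upd; case: eqP => [-> _|//].
by rewrite h1 ?h2.
Qed.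

Definition tensor (l : seq I) (P : I -> M -> int) (tau : I -> M) : int :=
  if `[< forall i, i \notin l -> tau i = d >] then \prod_(i <- l) P i (tau i) else 0.

Lemma covers_tensor (l : seq I) (P : I -> M -> int) (s : I -> seq cM) :
  uniq l -> (forall i, covers (P i) (s i)) -> covers (tensor l P) (tups l s).
Proof.
move=> ul cs; split; first by apply: uniq_tups => // i; case: (cs i).
move=> tau; rewrite /tensor; case: asboolP => [dtau|]; last by rewrite eqxx.
rewrite prodf_seq_neq0 => /allP Pnz; apply/mem_tups => //; split => // i il.
exact/(cs i).2/(Pnz i il).
Qed.

End Tuples.

Lemma prod_if (I : eqType) (C : I -> Prop) (x : I -> int) (l : seq I) :
  \prod_(i <- l) (if `[< C i >] then x i else 0) =
  if `[< forall i, i \in l -> C i >] then \prod_(i <- l) x i else 0.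
Proof.
elim: l => [|i l IH]; first by rewrite !big_nil asboolT.
rewrite !big_cons IH; case: (asboolP (C i)) => Ci; last first.
  by rewrite mul0r asboolF // => H; apply: Ci; apply: H; rewrite mem_head.
rewrite (@asbool_equiv_eq _ (forall j, j \in l -> C j)).
  by case: ifP; rewrite ?mulr0.
split=> H j; first by move=> jl; apply: H; rewrite in_cons jl orbT.
by rewrite in_cons => /orP [/eqP ->|/H].
Qed.

Lemma push_tensor (I : eqType) (M M' : Type) (d : M) (d' : M') (f : M -> M')
    (l : seq I) (P : I -> M -> int) :
  f d = d' -> uniq l -> (forall i, finite_set (fsupp (P i))) ->
  push (fun tau => f \o tau) (tensor d l P) = tensor d' l (fun i => push f (P i)).
Proof.
move=> fd ul fP; pose s i := fsupp_seq (P i).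
have cs i : covers (P i) (s i) by exact: covers_fsupp_seq.
apply/funext => tau'; rewrite (pushE _ _ (covers_tensor d ul cs)) {2}/tensor.
case: (asboolP (forall i, i \notin l -> tau' i = d')) => [dtau'|ndtau']; last first.
  apply: big1_seq => tau /(mem_tups _ _ _ ul) [_ dtau]; case: asboolP => // ftau.
  by case: ndtau' => i il; rewrite -ftau /= dtau.
under eq_bigr => i _ do rewrite (pushE _ _ (cs i)).
rewrite (big_distr_tups d) //; apply: eq_big_seq => tau /(mem_tups _ _ _ ul) [_ dtau].
rewrite prod_if /tensor (asboolT dtau); congr (if _ then _ else _).
apply: asbool_equiv_eq; split => [<- //|ftau]; apply/funext => i.
by case: (boolP (i \in l)) => il; [exact: ftau | rewrite /= dtau ?dtau'].
Qed.

Lemma comb_tensor (E : finType) (X Y : ptopologicalType) (A : {set {set E}})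
    (P : {set E} -> ({ptws E -> RR} -> (X -> Y)) -> int) :
  comb A P = push (glue A) (tensor (fun _ => @dflt X Y) (enum A) P).
Proof.
apply/funext => g; rewrite /comb /push -fsbig_mkcondl.
under [RHS]eq_fsbigr => tau _ do rewrite big_enum.
apply: eq_fsbigl; apply/seteqP; split=> tau [Htau <-]; split=> // F.
  by rewrite mem_enum; exact: Htau.
by rewrite -mem_enum; exact: Htau.
Qed.

Section PostComposition.
Variables (E : finType) (X Y X' Y' : ptopologicalType).
Variable m : (X -> Y) -> (X' -> Y').
Hypothesis m_dflt : m (@dflt X Y) = @dflt X' Y'.
Local Notation D := {ptws E -> RR}.

Lemma restrU_comp (U : set D) (w : D -> (X -> Y)) :
  restrU U (m \o w) = m \o restrU U w.
Proof. by apply/funext => t; rewrite /restrU /=; case: asboolP. Qed.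

Lemma glue_comp (A : {set {set E}}) (tup : {set E} -> D -> (X -> Y)) :
  glue A (fun F => m \o tup F) = m \o glue A tup.
Proof. by apply/funext => t; rewrite /glue /=; case: asboolP. Qed.

Lemma comb_push (A : {set {set E}}) (P : {set E} -> (D -> (X -> Y)) -> int) :
  (forall F, finite_set (fsupp (P F))) ->
  comb A (fun F => push (comp m) (P F)) = push (comp m) (comb A P).
Proof.
move=> fP; have md : m \o (fun _ : D => @dflt X Y) = fun _ => @dflt X' Y'.
  by apply/funext => t /=.
have fT : finite_set (fsupp (tensor (fun _ => @dflt X Y) (enum A) P)).
  exact: covers_finite (covers_tensor _ (enum_uniq _) (fun F => covers_fsupp_seq (fP F))).
rewrite !comb_tensor -(push_tensor md (enum_uniq _) fP) !push_comp //.
by congr push; apply/funext => tup /=; rewrite glue_comp.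
Qed.

Lemma push_restrU_comp (U : set D) (S : (D -> (X -> Y)) -> int) :
  finite_set (fsupp S) ->
  push (restrU U) (push (comp m) S) = push (comp m) (push (restrU U) S).
Proof.
move=> fS; rewrite !push_comp //; congr push.
by apply/funext => w /=; rewrite restrU_comp.
Qed.

Lemma fissile_push (S : (D -> (X -> Y)) -> int) :
  finite_set (fsupp S) -> fissile S -> fissile (push (comp m) S).
Proof.
move=> fS fisS A lA; rewrite push_restrU_comp // fisS // -comb_push.
  by congr comb; apply/funext => F; rewrite push_restrU_comp.
by move=> F; exact: finite_fsupp_push.
Qed.

End PostComposition.

Lemma precomp_continuous (X Xt Y : ptopologicalType) (k : Xt -> X) : continuous k ->
  continuous ((fun v : X -> Y => v \o k) :
    {compact-open, X -> Y} -> {compact-open, Xt -> Y}).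
Proof.
move=> ck f; apply/compact_open_cvgP => [|K O cK oO fKO].
  by apply: fmap_filter; exact: nbhs_filter.
have cK' : compact (k @` K).
  by apply: continuous_compact => //; exact: continuous_subspaceT.
have : nbhs (f : {compact-open, X -> Y})
    [set g : {compact-open, X -> Y} | g @` (k @` K) `<=` O].
  apply: open_nbhs_nbhs; split; first exact: compact_open_open.
  by move=> y [_ [x Kx <-] <-]; apply: fKO; exists x.
by apply: filterS => g /= gO y [x Kx <-]; apply: gO; exists (k x) => //; exists x.
Qed.

Lemma postcomp_continuous (X Y Yt : ptopologicalType) (h : Y -> Yt) : continuous h ->
  continuous ((fun v : X -> Y => h \o v) :
    {compact-open, X -> Y} -> {compact-open, X -> Yt}).
Proof.
move=> ch f; apply/compact_open_cvgP => [|K O cK oO fKO].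
  by apply: fmap_filter; exact: nbhs_filter.
have oO' : open (h @^-1` O) by apply: open_comp => // y _; exact: ch.
have : nbhs (f : {compact-open, X -> Y})
    [set g : {compact-open, X -> Y} | g @` K `<=` h @^-1` O].
  apply: open_nbhs_nbhs; split; first exact: compact_open_open.
  by move=> y [x Kx <-]; apply: fKO; exists x.
by apply: filterS => g /= gO y [x Kx <-]; apply: (gO (g x)); exists x.
Qed.

Lemma bmaps_comp (X Y Z : ptopologicalType) (f : X -> Y) (g : Y -> Z) :
  bmaps f -> bmaps g -> bmaps (g \o f).
Proof.
move=> [cf fp] [cg gp]; split=> [x|]; last by rewrite /= fp gp.
exact: continuous_comp (cf x) (cg (f x)).
Qed.

(* Sufficient for [w |-> m o w] to preserve the filtration in degree n + 1. *)
Definition Fn_determined (D : topologicalType) (X Y X' Y' : ptopologicalType)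
    (m : (X -> Y) -> (X' -> Y')) (n : nat) (U : set D) : Prop :=
  forall R, @Fn D X' n U R ->
    exists (R' : set (option (D * X)))
           (Phi : (option (D * X) -> Y) -> (option (D * X') -> Y')),
      @Fn D X n U R' /\
      forall w, umaps U (@bmaps X Y) w ->
        restrZ R (sharp (m \o w)) = Phi (restrZ R' (sharp w)).

Section Transfer.
Variables (X Y X' Y' : ptopologicalType) (m : (X -> Y) -> (X' -> Y')).
Hypothesis m_dflt : m (@dflt X Y) = @dflt X' Y'.
Hypothesis m_continuous :
  continuous (m : {compact-open, X -> Y} -> {compact-open, X' -> Y'}).
Hypothesis m_bmaps : forall v, bmaps v -> bmaps (m v).

Lemma pcomp_comp (a v : X -> Y) : pcomp a v -> pcomp (m a) (m v).
Proof.
move=> [bv [g [cg [bg [g0 g1]]]]]; split; first exact: m_bmaps.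
exists (fun t => (m (g t) : {compact-open, X' -> Y'})); split.
  by move=> t; apply: (continuous_comp (cg t)); exact: m_continuous.
by split; [move=> t /bg; exact: m_bmaps | rewrite /= g0 g1].
Qed.

Lemma umaps_comp (D : topologicalType) (U : set D) (V : set (X -> Y))
    (V' : set (X' -> Y')) (w : D -> (X -> Y)) :
  (forall v, V v -> V' (m v)) -> umaps U V w -> umaps U V' (m \o w).
Proof.
move=> VV' [cw [wV wd]]; split.
  by move=> t; apply: (continuous_comp (cw t)); exact: m_continuous.
by split=> t; [move/wV/VV' | move/wd => /= ->].
Qed.

Lemma in_filt_push (D : topologicalType) (s : nat) (U : set D)
    (V : (D -> (X -> Y)) -> int) :
  Fn_determined m s.-1 U -> in_filt s U V -> in_filt s U (push (comp m) V).
Proof.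
move=> mdet [fV HV]; split.
  by apply: (in_free_push fV) => w; apply: umaps_comp.
move=> R /mdet [R' [Phi [FR' eR]]]; have fin := fV.1.
rewrite push_comp // (@eq_push _ _ _ (Phi \o (fun w => restrZ R' (sharp w)))) //.
  by rewrite -push_comp // HV // push0.
by move=> w /fV.2 Uw; rewrite /= eR.
Qed.

Lemma approx_comp (r : nat) (a b : X -> Y) :
  (forall E : finType, Fn_determined m r (@simplex E)) ->
  r_approx r a b -> r_approx r (m a) (m b).
Proof.
move=> mdet ab E E0; have [S [Sf [Sfis SF]]] := ab E E0; have fS := Sf.1.
exists (push (comp m) S); split.
  by apply: (in_free_push Sf) => w; apply: umaps_comp; exact: pcomp_comp.
split; first exact: fissile_push.
have -> : (fun w => gen (Xi (@simplex E) (m b)) w - push (comp m) S w) =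
    push (comp m) (fun w => gen (Xi (@simplex E) b) w - S w).
  rewrite pushB // ?push_gen; last exact: covers_finite (covers_gen _).
  by rewrite /Xi restrU_comp.
exact: in_filt_push.
Qed.

End Transfer.

Lemma In_map_iff (A B : Type) (f : A -> B) (s : seq A) y :
  List.In y (map f s) <-> exists x, f x = y /\ List.In x s.
Proof.
have -> : map f s = List.map f s by elim: s => //= x s ->.
exact: List.in_map_iff.
Qed.

Lemma Fn_image (D : Type) (X X' : ptopologicalType) (n : nat) (U : set D)
    (phi : option (D * X') -> option (D * X)) (R : set (option (D * X'))) :
  (forall z, wr_pts U z -> wr_pts U (phi z)) -> phi None = None ->
  Fn n U R -> Fn n U (phi @` R).
Proof.
move=> phiU phiN [RU [RN [s [sn eR]]]]; subst R.
split; first by move=> _ [z Rz <-]; apply/phiU/RU.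
split; first by exists None.
exists (map phi s); rewrite size_map; split=> //.
apply/seteqP; split=> y /=.
- by move=> [z zs <-]; apply/In_map_iff; exists z.
- by move=> /In_map_iff [z [<- zs]]; exists z.
Qed.

Section Precomposition.
Variables (D : topologicalType) (X Xt Y : ptopologicalType) (k : Xt -> X).

(* id wr k : U wr Xt -> U wr X; points mapped to the basepoint collapse to [None]. *)
Definition wr_map (z : option (D * Xt)) : option (D * X) :=
  if z is Some (t, x) then (if `[< k x = point >] then None else Some (t, k x))
  else None.

Lemma wr_pts_map (U : set D) z : wr_pts U z -> wr_pts U (wr_map z).
Proof.
case=> [-> //|[[t x] [Ut _] <-]]; first by left.
rewrite /wr_map; case: asboolP => [_|kx]; first by left.
by right; exists (t, k x) => //; split=> //; apply/eqP.
Qed.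

Lemma sharp_precomp (U : set D) (w : D -> (X -> Y)) z :
  (forall t, U t -> bmaps (w t)) -> wr_pts U z ->
  sharp (fun t => w t \o k) z = sharp w (wr_map z).
Proof.
move=> wb [-> //|[[t x] [Ut _] <-]] /=.
by case: asboolP => //= ->; case: (wb t Ut).
Qed.

Lemma Fn_determined_precomp (n : nat) (U : set D) :
  Fn_determined (fun v : X -> Y => v \o k) n U.
Proof.
move=> R FR; exists (wr_map @` R), (fun rho => restrZ R (rho \o wr_map)).
split; first by apply: Fn_image => //; exact: wr_pts_map.
move=> w [_ [wb _]]; apply/funext => z; rewrite /restrZ /=.
case: asboolP => // Rz; rewrite asboolT; last by exists z.
by rewrite -(sharp_precomp wb) //; exact: FR.1.
Qed.

End Precomposition.

Lemma Fn_determined_postcomp (D : topologicalType) (X Y Yt : ptopologicalType)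
    (h : Y -> Yt) (n : nat) (U : set D) :
  h point = point -> Fn_determined (fun v : X -> Y => h \o v) n U.
Proof.
move=> hp R FR; exists R, (comp h); split=> // w _.
by apply/funext => z; rewrite /restrZ /=; case: asboolP => _ //; case: z.
Qed.

Unset Implicit Arguments.
Local Close Scope ring_scope.

Theorem corollary5p1 (X Y Xt Yt : ptopologicalType) (r : nat)
    (k : Xt -> X) (h : Y -> Yt) (a b : X -> Y) :
  cellular X -> cellular Y -> cellular Xt -> cellular Yt ->
  compact [set: X] -> compact [set: Xt] ->
  bmaps k -> bmaps h -> bmaps a -> bmaps b ->
  r_approx r a b ->
  r_approx r (a \o k) (b \o k) /\ r_approx r (h \o a) (h \o b).
Proof.
move=> _ _ _ _ _ _ [ck kp] [ch hp] _ _ ab; split.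
- apply: (@approx_comp X Y Xt Y (fun v => v \o k)) => //.
  + exact: precomp_continuous.
  + by move=> v bv; apply: bmaps_comp.
  + by move=> E; exact: Fn_determined_precomp.
- apply: (@approx_comp X Y X Yt (fun v => h \o v)) => //.
  + by apply/funext => x; rewrite /dflt /= hp.
  + exact: postcomp_continuous.
  + by move=> v bv; apply: bmaps_comp.
  + by move=> E; exact: Fn_determined_postcomp.
Qed.
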